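(* Let $G\subset GL(V)$ be a reflection group and let $g\in G$ with $\ell(g)=\operatorname{codim}(g)$. If $h\in G$ satisfies $h\le_\ell g$, then $h\le_\perp g$.
   Context: $V$ is a finite-dimensional vector space of dimension $n$ over $\mathbb{R}$ or $\mathbb{C}$. A reflection is an element of $GL(V)$ of finite order fixing a hyperplane pointwise; a reflection group is a finite subgroup of $GL(V)$ generated by reflections. $\ell(g)$ is the minimal number of reflections of $G$ whose product is $g$ ($\ell(1)=0$). $\operatorname{codim}(g)=n-\dim\{v\in V:gv=v\}$. The reflection length order: $a\le_\ell c$ iff $\ell(a)+\ell(a^{-1}c)=\ell(c)$. The codimension order: $a\le_\perp c$ iff $\operatorname{codim}(a)+\operatorname{codim}(a^{-1}c)=\operatorname{codim}(c)$. *)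

From mathcomp Require Import all_boot all_algebra.
From mathcomp Require Import boolp reals.
From mathcomp.real_closed Require Import complex.
Set Implicit Arguments. Unset Strict Implicit. Unset Printing Implicit Defensive.
Import GRing.Theory.
Local Open Scope ring_scope.

Definition scal (R : realType) (b : bool) : fieldType :=
  if b then (R : fieldType) else (R[i] : fieldType).

Section ReflGroups.
Variables (F : fieldType) (n : nat).
(* V = row vectors 'rV[F]_n; elements of GL(V) are invertible n x n matrices
   acting on the right: v |-> v *m g. The group law is matrix product. *)

Definition mxprod (s : seq 'M[F]_n) : 'M[F]_n := foldr mulmx 1%:M s.

Definition fixspace (g : 'M[F]_n) : 'M[F]_n := kermx (g - 1%:M).

Definition codim (g : 'M[F]_n) : nat := (n - \rank (fixspace g))%N.

Definition is_reflection (r : 'M[F]_n) : Prop :=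
  [/\ r \in unitmx,
      exists2 k : nat, (0 < k)%N & r ^+ k = 1%:M,
      r != 1%:M &
      exists H : 'M[F]_n, \rank H = n.-1 /\ (H <= fixspace r)%MS].

(* G (given by the finite list of its elements) is a finite subgroup of
   GL(V) generated by reflections (in a finite group every element of the
   generated subgroup is a product of generators). *)
Definition is_refl_group (G : seq 'M[F]_n) : Prop :=
  [/\ forall g, g \in G -> g \in unitmx,
      1%:M \in G,
      forall a b, a \in G -> b \in G -> a *m b \in G,
      forall a, a \in G -> invmx a \in G &
      forall g, g \in G -> exists s : seq 'M[F]_n,
        (forall r, r \in s -> r \in G /\ is_reflection r) /\ g = mxprod s].

Definition reflprod (G : seq 'M[F]_n) (g : 'M[F]_n) (k : nat) : Prop :=
  exists s : seq 'M[F]_n,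
    [/\ size s = k, (forall r, r \in s -> r \in G /\ is_reflection r)
      & g = mxprod s].

Lemma reflprod_asbool (G : seq 'M[F]_n) g :
  (exists k, reflprod G g k) -> exists k, `[< reflprod G g k >].
Proof. by case=> k h; exists k; apply/asboolP. Qed.

(* reflection length: minimal number of reflections of G with product g
   (0 if g is not such a product; never happens for g in G) *)
Definition rlen (G : seq 'M[F]_n) (g : 'M[F]_n) : nat :=
  match pselect (exists k, reflprod G g k) with
  | left h => ex_minn (reflprod_asbool h)
  | right _ => 0%N
  end.

Definition le_refl (G : seq 'M[F]_n) (a c : 'M[F]_n) : Prop :=
  (rlen G a + rlen G (invmx a *m c))%N = rlen G c.

Definition le_codim (a c : 'M[F]_n) : Prop :=
  (codim a + codim (invmx a *m c))%N = codim c.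

End ReflGroups.

From mathcomp Require Import all_boot all_algebra.
From mathcomp Require Import boolp reals.
From mathcomp.real_closed Require Import complex.
From mathcomp Require Import zify.
Import GRing.Theory.
Local Open Scope ring_scope.

(* Codimension is subadditive, since Fix(a) ∩ Fix(b) ⊆ Fix(ab), and a
   reflection has codimension at most 1; hence codim <= reflection length.
   If h <=_l g and l(g) = codim g, then
     codim g <= codim h + codim (h^-1 g) <= l(h) + l(h^-1 g) = l(g) = codim g,
   so equality holds throughout, which is h <=_perp g. *)

Section Codimension.
Context {F : fieldType} {n : nat}.
Implicit Types (a b : 'M[F]_n) (G s : seq 'M[F]_n).

Lemma mulmx_fixspace {a C : 'M[F]_n} : (C <= fixspace a)%MS -> C *m a = C.
Proof.
by move/sub_kermxP; rewrite mulmxBr mulmx1 => /eqP; rewrite subr_eq0 => /eqP.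
Qed.

Lemma fixspace_mulmx a b :
  (fixspace a :&: fixspace b <= fixspace (a *m b))%MS.
Proof.
apply/sub_kermxP; rewrite mulmxBr mulmx1 mulmxA.
by rewrite (mulmx_fixspace (capmxSl _ _)) (mulmx_fixspace (capmxSr _ _)) subrr.
Qed.

Lemma codim_mul a b : (codim (a *m b) <= codim a + codim b)%N.
Proof.
rewrite /codim.
have := mxrankS (fixspace_mulmx a b).
have := mxrank_sum_cap (fixspace a) (fixspace b).
have := rank_leq_col (fixspace a + fixspace b)%MS.
have := rank_leq_col (fixspace a); have := rank_leq_col (fixspace b).
lia.
Qed.

Lemma codim1 : codim (1%:M : 'M[F]_n) = 0%N.
Proof.
apply/eqP; rewrite subn_eq0 -{1}(mxrank1 F n) mxrankS //.
by apply/sub_kermxP; rewrite subrr mulmx0.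
Qed.

Lemma codim_reflection a : is_reflection a -> (codim a <= 1)%N.
Proof. by case=> _ _ _ [H [rH /mxrankS]]; rewrite rH /codim; lia. Qed.

Lemma codim_mxprod G s :
  (forall r, r \in s -> r \in G /\ is_reflection r) ->
  (codim (mxprod s) <= size s)%N.
Proof.
elim: s => [|r s IHs] hs; first by rewrite /mxprod codim1.
have [_ /codim_reflection hr] := hs r (mem_head _ _).
have {}IHs := IHs (fun x xs => hs x (mem_behead (s := r :: s) xs)).
by have := codim_mul r (mxprod s); rewrite /mxprod /= -/(mxprod _); lia.
Qed.

Lemma reflprod_rlen G a : (exists k, reflprod G a k) -> reflprod G a (rlen G a).
Proof.
move=> ex; rewrite /rlen; case: pselect => [h|//].
by case: ex_minnP => m /asboolP.
Qed.

Lemma codim_le_rlen {G a} : (exists k, reflprod G a k) -> (codim a <= rlen G a)%N.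
Proof. by move/reflprod_rlen=> [s [<- hs ->]]; apply: codim_mxprod hs. Qed.

Lemma refl_group_reflprod {G a} :
  is_refl_group G -> a \in G -> exists k, reflprod G a k.
Proof. by case=> _ _ _ _ hgen /hgen [s [hs ->]]; exists (size s), s. Qed.

End Codimension.

Theorem mainTheorem3 (R : realType) (b : bool) (n : nat)
    (G : seq 'M[scal R b]_n) :
  is_refl_group G ->
  forall g : 'M[scal R b]_n, g \in G -> rlen G g = codim g ->
  forall h : 'M[scal R b]_n, h \in G -> le_refl G h g -> le_codim h g.
Proof.
move=> hG g gG rlen_g h hG_h; rewrite /le_refl /le_codim.
have [hunit _ hmul hinv _] := hG.
set k := invmx h *m g.
have kG : k \in G by rewrite hmul ?hinv.
have le_h := codim_le_rlen (refl_group_reflprod hG hG_h).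
have le_k := codim_le_rlen (refl_group_reflprod hG kG).
have := codim_mul h k; rewrite mulKVmx ?hunit //.
lia.
Qed.
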